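(* Let $F:[n]^\ell\to\mathbb{R}$ be permutation-invariant. Then: (1) for every $a\in[n]$, every integer $0\le i\le\ell-1$ and every $X\in[n]^i$, $f_{i+1,F}(a,X)=f_{i,F|_{\{a\}}}(X)-f_{i,F}(X)$; (2) for every integer $0\le i\le\ell$ and every $X\in[n]^i$, $$f_{i,F}(X)=\sum_{B\subseteq\{1,\dots,i\}}(-1)^{i-|B|}\,\delta_{X|_B}(F),$$ where $X|_B$ is the ordered tuple of entries of $X$ with indices in $B$.
   Context: $[n]=\{0,\dots,n-1\}=\mathbb{Z}/n\mathbb{Z}$, $\chi_t(x)=e^{2\pi itx/n}$, $\chi_T(x)=\prod_j\chi_{T_j}(x_j)$ for $T\in[n]^m$, and $\hat F(T)=\mathbb{E}_{Y\in[n]^m}[F(Y)\overline{\chi_T(Y)}]$ for $F:[n]^m\to\mathbb{R}$, so $F=\sum_T\hat F(T)\chi_T$. $F$ is permutation-invariant if $F(x_1,\dots,x_m)=F(x_{\pi(1)},\dots,x_{\pi(m)})$ for every permutation $\pi$. For $F:[n]^m\to\mathbb{R}$ and $0\le i\le m$, $f_{i,F}:[n]^i\to\mathbb{C}$ is $f_{i,F}(x_1,\dots,x_i)=\sum_{(T_1,\dots,T_i)\in([n]\setminus\{0\})^i}\hat F(T_1,\dots,T_i,0,\dots,0)\chi_{T_1,\dots,T_i}(x_1,\dots,x_i)$. For $A=(a_1,\dots,a_r)\in[n]^r$, $r\le m-1$, the restriction $F|_A:[n]^{m-r}\to\mathbb{R}$ is $F|_A(x)=F(a_1,\dots,a_r,x)$,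 and $\delta_A(F)=\mathbb{E}_{x\in[n]^{m-r}}[F|_A(x)]$; for $A$ empty, $F|_A=F$ and $\delta_A(F)=\mathbb{E}[F]$. *)

From HB Require Import structures.
From mathcomp Require Import all_boot all_order all_algebra fingroup perm.
From mathcomp Require Import reals trigo.
From mathcomp Require Import complex.
Set Implicit Arguments. Unset Strict Implicit. Unset Printing Implicit Defensive.
Import Order.TTheory GRing.Theory Num.Theory.
Local Open Scope ring_scope.
Local Open Scope complex_scope.

Section Fourier.
Variables (R : realType) (n : nat).

Definition omega : R[i] := (cos (2 * pi / n%:R)) +i* (sin (2 * pi / n%:R)).

Definition chi (t x : nat) : R[i] := omega ^+ (t * x).

(* chi_T(x) = prod_j chi_{T_j}(x_j); frequencies T given as a seq nat,
   entries beyond size T are 0 (this realises the zero padding). *)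
Definition chiT (T : seq nat) (k : nat) (x : k.-tuple 'I_n) : R[i] :=
  \prod_(j < k) chi (nth 0%N T j) (tnth x j).

Definition fourier (k : nat) (F : k.-tuple 'I_n -> R) (T : seq nat) : R[i] :=
  ((n ^ k)%:R)^-1 * \sum_(Y : k.-tuple 'I_n) (F Y)%:C * conjc (chiT T Y).

Definition fpart (k : nat) (F : k.-tuple 'I_n -> R) (i : nat)
    (X : i.-tuple 'I_n) : R[i] :=
  \sum_(T : i.-tuple 'I_n | all (fun t : 'I_n => val t != 0%N) T)
     fourier F (map val T) * chiT (map val T) X.

Definition liftF (k : nat) (F : k.-tuple 'I_n -> R) (s : seq 'I_n) : R :=
  match @insub _ _ (k.-tuple 'I_n) s with Some t => F t | None => 0 end.

Definition restr (k : nat) (F : k.-tuple 'I_n -> R) (A : seq 'I_n)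
    : (k - size A).-tuple 'I_n -> R :=
  fun x => liftF F (cat A (tval x)).
Arguments restr {k} F A.

Definition delta (k : nat) (F : k.-tuple 'I_n -> R) (A : seq 'I_n) : R :=
  ((n ^ (k - size A))%:R)^-1 * \sum_(x : (k - size A).-tuple 'I_n) restr F A x.

Definition perm_invariant (k : nat) (F : k.-tuple 'I_n -> R) : Prop :=
  forall (s : 'S_k) (x : k.-tuple 'I_n), F x = F [tuple tnth x (s j) | j < k].

End Fourier.
Arguments restr {R n k} F A.

(* Orthogonality of the characters of Z/nZ gives
   sum_{t <> 0} chi_t(x) conj(chi_t(y)) = n [x = y] - 1, so the Fourier sum
   defining f_{i,F}(X) collapses to E_Y [F(Y) prod_{j<i} (n [X_j = Y_j] - 1)].
   Expanding the product over the subsets B of indices gives an alternating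
   sum of n^|B| E_Y [F(Y) [Y agrees with X on B]]; permutation invariance moves
   the agreement to the first |B| coordinates of Y, which leaves
   delta_{X|_B}(F).  For (1), split off the factor of the first coordinate
   instead: its part n [a = Y_0] yields the kernel of F|_{a}, and in its
   part -1 permutation invariance shifts the other coordinates back. *)

From HB Require Import structures.
From mathcomp Require Import all_boot all_order all_algebra fingroup perm.
From mathcomp Require Import reals trigo.
From mathcomp Require Import complex.
From mathcomp Require Import ring lra.
Import Order.TTheory GRing.Theory Num.Theory.
Local Open Scope ring_scope.
Local Open Scope complex_scope.

Lemma big_tuple_prod {C : comPzSemiRingType} {T : finType} {k} {P : pred T}
    (f : 'I_k -> T -> C) :
  \sum_(t : k.-tuple T | all P t) \prod_(j < k) f j (tnth t j) =
  \prod_(j < k) \sum_(x | P x) f j x.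
Proof.
rewrite bigA_distr_big (reindex finfun_of_tuple) /=; last first.
  by exists tuple_of_finfun => [t _ | g _]; rewrite ?finfun_of_tupleK ?tuple_of_finfunK.
apply: eq_big => [t | t _]; last by apply: eq_bigr => j _; rewrite ffunE.
by apply/all_tnthP/familyP => tP j; have := tP j; rewrite ?ffunE.
Qed.

Lemma big_tuple_cons (C : nmodType) (T : finType) k (f : k.+1.-tuple T -> C) :
  \sum_(t : k.+1.-tuple T) f t = \sum_(a : T) \sum_(t : k.-tuple T) f [tuple of a :: t].
Proof.
rewrite pair_big (reindex (fun p : T * k.-tuple T => [tuple of p.1 :: p.2])) //=.
exists (fun t : k.+1.-tuple T => (thead t, [tuple of behead t])) => [[a t] _ | t _].
  by congr (_, _); apply: val_inj.
by rewrite [in RHS](tuple_eta t); apply: val_inj.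
Qed.

Lemma big_tuple_prefix {C : nmodType} {T : finType} {l} (s : seq T) (H : seq T -> C) :
  (size s <= l)%N ->
  \sum_(t : l.-tuple T | take (size s) t == s) H t =
  \sum_(t : (l - size s).-tuple T) H (s ++ t).
Proof.
elim: s l H => [|a s IHs] l H le_sl.
  by rewrite subn0; apply: eq_bigl => t; rewrite take0.
case: l le_sl => [//|l] le_sl.
rewrite big_mkcond big_tuple_cons (bigD1 a) //= [X in _ + X]big1 => [|b neq_ba].
  rewrite addr0 -(IHs l (fun t => H (a :: t))) // [RHS]big_mkcond.
  by apply: eq_bigr => t _; rewrite eqseq_cons eqxx.
by apply: big1 => t _; rewrite eqseq_cons (negbTE neq_ba).
Qed.

Lemma uniq_take_perm l (p : seq 'I_l) : uniq p ->
  exists s : 'S_l, take (size p) [seq s j | j <- enum 'I_l] = p.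
Proof.
move=> uniq_p; set q := p ++ [seq j <- enum 'I_l | j \notin p].
have /tuple_permP [s q_s] : perm_eq q (ord_tuple l).
  apply: uniq_perm => [||j]; rewrite ?enum_uniq //.
    rewrite cat_uniq uniq_p filter_uniq ?enum_uniq //= andbT.
    by apply/hasPn => j; rewrite mem_filter => /andP [].
  by rewrite mem_cat mem_filter mem_enum andbT orbN.
exists s; have -> : [seq s j | j <- enum 'I_l] = q.
  by rewrite q_s; apply: eq_map => j; rewrite tnth_ord_tuple.
by rewrite take_size_cat.
Qed.

Lemma prod_subr1 (C : comPzRingType) k (a : 'I_k -> C) :
  \prod_(j < k) (a j - 1) =
  \sum_(B : {set 'I_k}) (-1) ^+ (k - #|B|) * \prod_(j in B) a j.
Proof.
rewrite bigA_distr; apply: eq_bigr => B _.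
rewrite (bigID (mem B)) /= mulrC; congr (_ * _).
  rewrite (eq_bigr (fun=> -1)) => [|j /negbTE ->//].
  rewrite prodr_const; congr (_ ^+ _); apply/eqP.
  rewrite -(eqn_add2l #|B|) subnKC ?cardC ?card_ord //.
  by rewrite -[X in (_ <= X)%N](card_ord k) max_card.
by apply: eq_bigr => j ->.
Qed.

Lemma prodr_bool (C : comPzSemiRingType) (I : finType) (A : {pred I}) (b : pred I) :
  \prod_(j in A) (b j)%:R = [forall j in A, b j]%:R :> C.
Proof.
case: forall_inP => [b_A | /forall_inP]; first by apply: big1 => j /b_A ->.
rewrite negb_forall_in => /existsP [j /andP [jA /negbTE b_j]].
by rewrite (bigD1 j) //= b_j mul0r.
Qed.

Lemma sum_expr_root1 (F : idomainType) (w : F) m : w ^+ m = 1 ->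
  \sum_(t < m) w ^+ t = if w == 1 then m%:R else 0.
Proof.
case: eqP => [-> _ | /eqP w_neq1 wm1].
  by rewrite (eq_bigr (fun=> 1)) => [|t _]; rewrite ?expr1n // sumr_const card_ord.
apply/eqP; have := subrX1 w m; rewrite wm1 subrr => /esym/eqP.
by rewrite mulf_eq0 subr_eq0 (negbTE w_neq1).
Qed.

Section FourierExpansion.
Variables (R : realType) (n : nat).
Hypothesis n_gt0 : (0 < n)%N.

Let theta : R := 2 * pi / n%:R.

Lemma omegaX k : omega R n ^+ k = cos (k%:R * theta) +i* sin (k%:R * theta).
Proof.
elim: k => [|k IHk]; first by rewrite expr0 mul0r cos0 sin0.
rewrite exprSr IHk /omega -/theta -addn1 natrD mulrDl mul1r cosD sinD /=.
by congr (_ +i* _); ring.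
Qed.

Lemma cos_2pi_frac_lt1 (m : nat) : (0 < m < n)%N -> cos (m%:R * theta) < 1.
Proof.
case/andP=> m_gt0 lt_mn.
have -> : m%:R * theta = (m%:R * pi / n%:R) *+ 2.
  by rewrite /theta -mulr_natr; field; rewrite pnatr_eq0 -lt0n.
have sin_gt0 : 0 < sin (m%:R * pi / n%:R : R).
  apply: sin_gt0_pi; rewrite divr_gt0 ?mulr_gt0 ?pi_gt0 ?ltr0n //=.
  by rewrite ltr_pdivrMr ?ltr0n // mulrC ltr_pM2l ?pi_gt0 ?ltr_nat.
rewrite cos_mulr2n cos2sin2; have := exprn_gt0 2 sin_gt0; lra.
Qed.

Lemma omega_prim : n.-primitive_root (omega R n).
Proof.
have omega_n : omega R n ^+ n = 1.
  rewrite omegaX (_ : n%:R * theta = pi *+ 2) ?cos2pi ?sin2pi //.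
  by rewrite /theta mulr2n; field; rewrite pnatr_eq0 -lt0n.
have [m prim_m dvd_mn] := prim_order_exists n_gt0 omega_n.
suff eq_mn : m = n by rewrite eq_mn in prim_m.
apply/eqP; rewrite eqn_leq dvdn_leq //= leqNgt; apply/negP => lt_mn.
have : cos (m%:R * theta) < 1.
  by apply: cos_2pi_frac_lt1; rewrite (prim_order_gt0 prim_m) lt_mn.
by have := prim_expr_order prim_m; rewrite omegaX => -[-> _]; rewrite ltxx.
Qed.

Lemma omegaX_conj k : conjc (omega R n ^+ k) = (omega R n ^+ k)^-1.
Proof.
apply/esym/mulr1_eq; rewrite omegaX /=.
have := cos2Dsin2 (k%:R * theta); rewrite !expr2 => cos2_sin2.
by congr (_ +i* _); lra.
Qed.

Lemma sum_chi_conj (x y : 'I_n) :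
  \sum_(t < n) chi R n t x * conjc (chi R n t y) = (x == y)%:R * n%:R.
Proof.
have omega_neq0 k : omega R n ^+ k != 0.
  by rewrite expf_neq0 ?(prim_root_eq0 omega_prim) -?lt0n.
set w := omega R n ^+ x / omega R n ^+ y.
have chi_conj t : chi R n t x * conjc (chi R n t y) = w ^+ t.
  by rewrite /chi omegaX_conj exprMn exprVn -!exprM !(mulnC t).
have wn1 : w ^+ n = 1.
  rewrite exprMn exprVn -!exprM !(mulnC _ n) !exprM (prim_expr_order omega_prim).
  by rewrite !expr1n invr1 mulr1.
under eq_bigr => t _ do rewrite chi_conj.
rewrite sum_expr_root1 //.
have -> : (w == 1) = (x == y).
  rewrite -(inj_eq (mulIf (omega_neq0 y))) divfK // mul1r.
  by rewrite (eq_prim_root_expr omega_prim) !modn_small.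
by case: (x == y); rewrite ?mul1r ?mul0r.
Qed.

Let x0 : 'I_n := Ordinal n_gt0.

Lemma sum_nonzero_chi_conj (x y : 'I_n) :
  \sum_(t < n | val t != 0%N) chi R n t x * conjc (chi R n t y) =
  (x == y)%:R * n%:R - 1.
Proof.
have chi0 z : chi R n x0 z = 1 by rewrite /chi /= mul0n expr0.
rewrite -sum_chi_conj [in RHS](bigD1 x0) // !chi0 rmorph1 mulr1 /= addrC addrK.
by apply: eq_bigl => t; rewrite -val_eqE.
Qed.

Lemma chiT_take k (T : seq nat) (Y : k.-tuple 'I_n) : (size T <= k)%N ->
  chiT R T Y = \prod_(j < size T) chi R n (nth 0%N T j) (nth x0 Y j).
Proof.
move=> le_Tk; rewrite /chiT.
rewrite (big_ord_widen k (fun j => chi R n (nth 0%N T j) (nth x0 Y j))) //.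
rewrite [RHS]big_mkcond /=; apply: eq_bigr => j _; rewrite (tnth_nth x0).
by case: ltnP => // le_Tj; rewrite nth_default // /chi mul0n expr0.
Qed.

Definition fpart_kernel {i} (X : i.-tuple 'I_n) (y : seq 'I_n) : R[i] :=
  \prod_(j < i) ((tnth X j == nth x0 y j)%:R * n%:R - 1).

Lemma fpartE k (F : k.-tuple 'I_n -> R) i (X : i.-tuple 'I_n) : (i <= k)%N ->
  fpart F X = ((n ^ k)%:R)^-1 * \sum_(Y : k.-tuple 'I_n) (F Y)%:C * fpart_kernel X Y.
Proof.
move=> le_ik; rewrite /fpart /fourier.
under eq_bigr => T _ do rewrite -mulrA big_distrl /=.
rewrite -mulr_sumr exchange_big /=; congr (_ * _); apply: eq_bigr => Y _.
under eq_bigr => T _ do rewrite -mulrA.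
rewrite -mulr_sumr; congr (_ * _).
have nth_T (T : i.-tuple 'I_n) (j : 'I_i) : nth 0%N (map val T) j = tnth T j.
  by rewrite (nth_map x0) ?size_tuple // -tnth_nth.
transitivity (\sum_(T : i.-tuple 'I_n | all (fun t : 'I_n => val t != 0%N) T)
    \prod_(j < i)
      (chi R n (tnth T j) (nth x0 X j) * conjc (chi R n (tnth T j) (nth x0 Y j)))).
  apply: eq_bigr => T _; rewrite !chiT_take ?size_map ?size_tuple //.
  rewrite rmorph_prod -big_split /=.
  by apply: eq_bigr => j _; rewrite nth_T mulrC.
rewrite (big_tuple_prod
  (fun j (t : 'I_n) => chi R n t (nth x0 X j) * conjc (chi R n t (nth x0 Y j)))).
by apply: eq_bigr => j _; rewrite sum_nonzero_chi_conj -tnth_nth.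
Qed.

Lemma liftF_tuple k (F : k.-tuple 'I_n -> R) (Y : k.-tuple 'I_n) : liftF F Y = F Y.
Proof. by rewrite /liftF valK. Qed.

Lemma sum_perm_invariant {l} {F : l.-tuple 'I_n -> R} (F_inv : perm_invariant F)
    (s : 'S_l) (G : l.-tuple 'I_n -> R[i]) :
  \sum_Y (F Y)%:C * G Y = \sum_Y (F Y)%:C * G [tuple tnth Y (s j) | j < l].
Proof.
pose act (s : 'S_l) (Y : l.-tuple 'I_n) := [tuple tnth Y (s j) | j < l].
have actK (s' : 'S_l) : cancel (act s') (act s'^-1%g).
  by move=> Y; apply: eq_from_tnth => j; rewrite !tnth_mktuple permKV.
have actVK (s' : 'S_l) : cancel (act s'^-1%g) (act s').
  by move=> Y; apply: eq_from_tnth => j; rewrite !tnth_mktuple permK.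
rewrite [RHS](reindex (act s^-1%g)) /=.
  apply: eq_bigr => Y _; rewrite -[X in _ = _ * G X]/(act s (act s^-1%g Y)).
  by rewrite actVK (F_inv s^-1%g Y).
by exists (act s) => Y _; [exact: actVK | exact: actK].
Qed.

Lemma sum_perm_invariant_uniq {l} {F : l.-tuple 'I_n -> R} (F_inv : perm_invariant F)
    (p : seq 'I_l) (G : seq 'I_n -> R[i]) : uniq p ->
  \sum_Y (F Y)%:C * G [seq tnth Y q | q <- p] = \sum_Y (F Y)%:C * G (take (size p) Y).
Proof.
move=> /uniq_take_perm [s take_s]; rewrite [RHS](sum_perm_invariant F_inv s).
by apply: eq_bigr => Y _; rewrite -[in LHS]take_s map_take -map_comp.
Qed.

Lemma fpart_kernel_take i (X : i.-tuple 'I_n) m (y : seq 'I_n) : (i <= m)%N ->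
  fpart_kernel X (take m y) = fpart_kernel X y.
Proof.
by move=> le_im; apply: eq_bigr => j _; rewrite nth_take // (leq_trans (ltn_ord j)).
Qed.

Lemma fpart_kernel_cons i (a : 'I_n) (X : i.-tuple 'I_n) (y : seq 'I_n) :
  fpart_kernel [tuple of a :: X] y =
  ((a == nth x0 y 0)%:R * n%:R - 1) * fpart_kernel X (behead y).
Proof.
rewrite /fpart_kernel big_ord_recl tnth0; congr (_ * _).
by apply: eq_bigr => j _; rewrite tnthS nth_behead.
Qed.

Lemma delta_sum k (F : k.-tuple 'I_n -> R) (s : seq 'I_n) :
  (delta F s)%:C =
  ((n ^ (k - size s))%:R)^-1 * \sum_(x : (k - size s).-tuple 'I_n) (restr F s x)%:C.
Proof. by rewrite /delta rmorphM rmorph_sum fmorphV rmorph_nat. Qed.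

Lemma sum_agree_on l (F : l.-tuple 'I_n -> R) i (X : i.-tuple 'I_n) (B : {set 'I_i}) :
  perm_invariant F -> (i <= l)%N ->
  \sum_(Y : l.-tuple 'I_n)
    (F Y)%:C * \prod_(j in B) ((tnth X j == nth x0 Y j)%:R * n%:R) =
  n%:R ^+ #|B| * \sum_(x : (l - size [seq tnth X j | j <- enum B]).-tuple 'I_n)
                   (restr F [seq tnth X j | j <- enum B] x)%:C.
Proof.
move=> F_inv le_il; set s := [seq tnth X j | j <- enum B].
pose p := [seq widen_ord le_il j | j <- enum B].
have size_s : size s = #|B| by rewrite size_map -cardE.
have agree_s (Y : l.-tuple 'I_n) :
    [forall j in B, tnth X j == nth x0 Y j] = (s == [seq tnth Y q | q <- p]).
  rewrite -map_comp; apply/forall_inP/eqP => [agree | /eq_in_map agree j jB].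
    by apply/eq_in_map => j; rewrite mem_enum => /agree /eqP ->; rewrite /= (tnth_nth x0).
  by rewrite agree ?mem_enum //= (tnth_nth x0).
under eq_bigr => Y _ do rewrite big_split prodr_const prodr_bool agree_s /= mulrA mulrC.
rewrite -mulr_sumr; congr (_ * _).
have uniq_p : uniq p.
  by rewrite map_inj_uniq ?enum_uniq // => j j' /(congr1 val) eq_val; apply: val_inj.
rewrite (sum_perm_invariant_uniq F_inv _ (fun y => (s == y)%:R) uniq_p).
have le_sl : (size s <= l)%N.
  by rewrite size_s (leq_trans (max_card _)) ?card_ord.
rewrite (_ : size p = size s) ?size_map // /restr.
rewrite -(big_tuple_prefix _ (fun y => (liftF F y)%:C)) //.
rewrite [RHS]big_mkcond /=; apply: eq_bigr => Y _; rewrite eq_sym liftF_tuple.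
by case: eqP; rewrite ?mulr1 ?mulr0.
Qed.

Lemma fpart_incl_excl l (F : l.-tuple 'I_n -> R) i (X : i.-tuple 'I_n) :
  perm_invariant F -> (i <= l)%N ->
  fpart F X = \sum_(B : {set 'I_i})
    (-1) ^+ (i - #|B|) * (delta F [seq tnth X j | j <- enum B])%:C.
Proof.
move=> F_inv le_il; rewrite fpartE // /fpart_kernel.
under eq_bigr => Y _ do rewrite prod_subr1 mulr_sumr.
rewrite exchange_big mulr_sumr; apply: eq_bigr => B _.
under eq_bigr => Y _ do rewrite mulrCA.
rewrite -mulr_sumr mulrCA sum_agree_on // delta_sum; congr (_ * _).
rewrite mulrA; congr (_ * _); rewrite size_map -cardE.
have le_Bl : (#|B| <= l)%N by rewrite (leq_trans (max_card _)) ?card_ord.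
rewrite -{1}(subnK le_Bl) expnD natrM invfM !natrX divfK // expf_neq0 //.
by rewrite pnatr_eq0 -lt0n.
Qed.

Lemma fpart_cons l (F : l.+1.-tuple 'I_n -> R) (a : 'I_n) i (X : i.-tuple 'I_n) :
  perm_invariant F -> (i <= l)%N ->
  fpart F [tuple of a :: X] = fpart (restr F [:: a]) X - fpart F X.
Proof.
move=> F_inv le_il.
have le_il1 : (i <= l.+1 - size [:: a])%N by rewrite subSS subn0.
rewrite fpartE // fpartE // fpartE ?(leqW le_il) //.
set K := fpart_kernel X.
have shift : \sum_(Y : l.+1.-tuple 'I_n) (F Y)%:C * K (behead Y) =
             \sum_(Y : l.+1.-tuple 'I_n) (F Y)%:C * K Y.
  have behead_map (Y : l.+1.-tuple 'I_n) :
      behead Y = [seq tnth Y q | q <- map (lift ord0) (enum 'I_l)].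
    by rewrite -[in LHS](map_tnth_enum Y) enum_ordSl.
  under eq_bigr => Y _ do rewrite behead_map.
  have uniq_lift : uniq (map (lift ord0) (enum 'I_l)).
    by rewrite map_inj_uniq ?enum_uniq //; exact: lift_inj.
  rewrite (sum_perm_invariant_uniq F_inv) //.
  by apply: eq_bigr => Y _; rewrite size_map size_enum_ord /K fpart_kernel_take.
have head : \sum_(Y : l.+1.-tuple 'I_n)
               (F Y)%:C * ((a == nth x0 Y 0)%:R * K (behead Y)) =
             \sum_(x : (l.+1 - size [:: a]).-tuple 'I_n) (restr F [:: a] x)%:C * K x.
  rewrite -(big_tuple_prefix _ (fun y => (liftF F y)%:C * K (behead y))) //.
  rewrite [RHS]big_mkcond; apply: eq_bigr => Y _; rewrite liftF_tuple.
  case: Y => -[|y ys] size_Y //=; rewrite take0 eqseq_cons andbT [a == y]eq_sym.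
  by case: (y == a); rewrite ?mul1r ?mul0r ?mulr0.
have expand Y : (F Y)%:C * (((a == nth x0 Y 0)%:R * n%:R - 1) * K (behead Y)) =
    n%:R * ((F Y)%:C * ((a == nth x0 Y 0)%:R * K (behead Y))) - (F Y)%:C * K (behead Y).
  by ring.
under eq_bigr => Y _ do rewrite fpart_kernel_cons -/K expand.
rewrite sumrB -mulr_sumr head shift mulrBr mulrA; congr (_ * _ - _).
have n_neq0 : n%:R != 0 :> R[i] by rewrite pnatr_eq0 -lt0n.
by rewrite subSS subn0 expnS natrM invfM mulrAC mulVf ?mul1r.
Qed.
End FourierExpansion.

Theorem lemmaC10 (R : realType) (n l : nat) (hn : (0 < n)%N)
    (F : l.-tuple 'I_n -> R) (HF : perm_invariant F) :
  (forall (a : 'I_n) (i : nat) (X : i.-tuple 'I_n), (i < l)%N ->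
     fpart F [tuple of a :: X] = fpart (restr F [:: a]) X - fpart F X)
  /\
  (forall (i : nat) (X : i.-tuple 'I_n), (i <= l)%N ->
     fpart F X = \sum_(B : {set 'I_i})
        (-1) ^+ (i - #|B|) * (delta F [seq tnth X j | j <- enum B])%:C).
Proof.
split => [a i X lt_il | i X le_il]; last exact: fpart_incl_excl.
by case: l F HF lt_il => // l F HF lt_il; exact: fpart_cons.
Qed.
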